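(* For every $n>6$, if $\Delta,\Delta'\in\mathcal{P}_n$ form a special pair for rule $128$, then $lab_\Delta$ and $lab_{\Delta'}$ differ on exactly one arc among the $2n$ arcs $(i,i+1)$, $(i+1,i)$, $i\in\mathbb{Z}_n$.
   Context: Cells are indexed by $\mathbb{Z}_n=\{0,\dots,n-1\}$, indices modulo $n$. Rule $128$ has local rule $r_{128}(x_1,x_2,x_3)=x_1\wedge x_2\wedge x_3$ and global function $f_{128,n}(x)_i=r_{128}(x_{i-1},x_i,x_{i+1})$. An update schedule is an ordered partition $\Delta=(\Delta_1,\dots,\Delta_k)$ of $\mathbb{Z}_n$ into nonempty blocks; $\mathcal{P}_n$ is the set of them. For a block $B$ let $f^{(B)}(x)_i=f_{128,n}(x)_i$ if $i\in B$ and $x_i$ otherwise; $f^{(\Delta)}_{128,n}=f^{(\Delta_k)}\circ\cdots\circ f^{(\Delta_1)}$. For $u,v\in\mathbb{Z}_n$ with $u\in\Delta_a$, $v\in\Delta_b$, $lab_\Delta((u,v))=\oplus$ if $b\le a$ and $\ominus$ if $a<b$. $\Delta\equiv\Delta'$ iff $lab_\Delta$ and $lab_{\Delta'}$ agree on every arc $(i,i+1)$ and $(i+1,i)$. A pair $\Delta,\Delta'$ is special for rule $128$ if $\Delta\not\equiv\Delta'$ but $f^{(\Delta)}_{128,n}=f^{(\Delta')}_{128,n}$. *)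

From mathcomp Require Import all_boot.
Set Implicit Arguments. Unset Strict Implicit. Unset Printing Implicit Defensive.

(* Cells are 'I_n (= Z_n); successor/predecessor mod n are ordS / ord_pred. *)
Definition config (n : nat) := {ffun 'I_n -> bool}.

Definition f128 (n : nat) (x : config n) : config n :=
  [ffun i => [&& x (ord_pred i), x i & x (ordS i)]].

Definition blockUpd (n : nat) (B : {set 'I_n}) (x : config n) : config n :=
  [ffun i => if i \in B then f128 x i else x i].

(* An update schedule = ordered partition (Delta_1, ..., Delta_k) of Z_n into
   nonempty blocks, represented as the sequence of its blocks. *)
Definition is_schedule (n : nat) (D : seq {set 'I_n}) : bool :=
  all (fun B : {set 'I_n} => B != set0) D &&
  [forall i : 'I_n, count (fun B : {set 'I_n} => i \in B) D == 1].

Definition schedF (n : nat) (D : seq {set 'I_n}) (x : config n) : config n :=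
  foldl (fun y B => blockUpd B y) x D.

Definition blk (n : nat) (D : seq {set 'I_n}) (u : 'I_n) : nat :=
  find (fun B : {set 'I_n} => u \in B) D.

(* lab_Delta((u,v)) : true = (+) (b <= a), false = (-) (a < b) *)
Definition lab (n : nat) (D : seq {set 'I_n}) (u v : 'I_n) : bool :=
  blk D v <= blk D u.

(* the 2n arcs: (false,i) |-> (i,i+1), (true,i) |-> (i+1,i) *)
Definition arc_lab (n : nat) (D : seq {set 'I_n}) (a : bool * 'I_n) : bool :=
  if a.1 then lab D (ordS a.2) a.2 else lab D a.2 (ordS a.2).

Definition sched_equiv (n : nat) (D D' : seq {set 'I_n}) : Prop :=
  forall a : bool * 'I_n, arc_lab D a = arc_lab D' a.

Definition special128 (n : nat) (D D' : seq {set 'I_n}) : Prop :=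
  ~ sched_equiv D D' /\ (forall x : config n, schedF D x = schedF D' x).

From mathcomp Require Import all_boot zify.
Set Implicit Arguments. Unset Strict Implicit. Unset Printing Implicit Defensive.

(* Say that updated values flow rightwards across the edge {t, t+1} (flowR) when
   cell t is updated strictly before t+1, and leftwards (flowL) when t+1 is updated
   strictly before t; these are the ⊖-labels of the arcs (t, t+1) and (t+1, t).
   Under rule 128 a cell ends in state 1 as soon as the initial configuration is 1
   on a window [s, e+1] into which no new value flows (no flowR at s, no flowL at e),
   while a flowR at k makes the new value of k+1 depend on the initial value of k-1.
   Running both schedules on the configuration that is 0 only at k-1 shows that if
   flowR holds at k for one schedule only, the other one has flowL on the n-3 edges
   ahead of k; symmetrically for flowL, behind k.  Hence flowR and flowL of the two
   schedules never meet on an edge, a flowR-difference forces flowL and rules out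
   flowR-differences on the n-3 edges ahead of it, and a flowL-difference rules out
   flowL on the n-3 edges behind it.  For n > 6 two windows of length n-3 on the
   n-cycle overlap, so at most one arc label differs. *)

Definition flowR (n : nat) (D : seq {set 'I_n}) (i : 'I_n) : bool := blk D i < blk D (ordS i).
Definition flowL (n : nat) (D : seq {set 'I_n}) (i : 'I_n) : bool := blk D (ordS i) < blk D i.

Section Schedule.
Variables (n : nat) (D : seq {set 'I_n}).
Hypothesis HD : is_schedule D.

Lemma count_blk i : count (fun B : {set 'I_n} => i \in B) D = 1.
Proof. by case/andP: HD => _ /forallP /(_ i) /eqP. Qed.

Lemma blk_lt_size i : blk D i < size D.
Proof. by rewrite /blk -has_find has_count count_blk. Qed.

Lemma mem_nth_blk i t : t < size D -> (i \in nth set0 D t) = (blk D i == t).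
Proof.
move=> t_lt; apply/idP/eqP => [i_t | <-]; last first.
  by apply: (nth_find set0 (a := fun B : {set 'I_n} => i \in B)); rewrite has_find blk_lt_size.
have none_before : ~~ has (fun B : {set 'I_n} => i \in B) (take t D).
  move: (count_blk i); rewrite -{1}(cat_take_drop t D) count_cat (drop_nth set0 t_lt) /= i_t.
  by rewrite has_count; lia.
rewrite has_take ?has_find ?blk_lt_size // -leqNgt in none_before.
apply/eqP; rewrite eqn_leq none_before andbT leqNgt.
by apply/negP => /(before_find set0); rewrite i_t.
Qed.

Lemma schedF_take_succ x t i : schedF (take t.+1 D) x i =
  if blk D i == t then f128 (schedF (take t D) x) i else schedF (take t D) x i.
Proof.
case: (ltnP t (size D)) => [t_lt | t_ge].
  by rewrite /schedF (take_nth set0 t_lt) foldl_rcons /blockUpd ffunE mem_nth_blk.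
have /ltn_eqF -> : blk D i < t by apply: leq_trans (blk_lt_size i) t_ge.
by rewrite !take_oversize // ltnW.
Qed.

Lemma schedF_take x t i :
  schedF (take t D) x i = if blk D i < t then schedF D x i else x i.
Proof.
have [t_le | lt_t] := leqP t (blk D i).
  elim: t t_le => [|t IH] t_le; first by rewrite take0.
  by rewrite schedF_take_succ gtn_eqF // IH // ltnW.
suff final : forall t', blk D i < t' ->
    schedF (take t' D) x i = schedF (take (blk D i).+1 D) x i.
  by rewrite final // -[in RHS](take_size D) final ?blk_lt_size.
elim=> // t' IH; rewrite ltnS leq_eqVlt => /predU1P [<- // | lt_t'].
by rewrite schedF_take_succ ltn_eqF // IH.
Qed.

Lemma schedF_cell x i : schedF D x i =
  [&& x i, (if flowR D (ord_pred i) then schedF D x (ord_pred i) else x (ord_pred i))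
         & (if flowL D i then schedF D x (ordS i) else x (ordS i))].
Proof.
have last_step : schedF D x i = f128 (schedF (take (blk D i) D) x) i.
  by have := schedF_take x (blk D i).+1 i; rewrite ltnSn schedF_take_succ eqxx => ->.
by rewrite last_step /f128 ffunE !schedF_take ltnn /flowR ord_predK andbCA.
Qed.

Lemma schedF_le_f128 x i : schedF D x i -> f128 x i.
Proof.
have seen_le j (b : bool) : (if b then schedF D x j else x j) -> x j.
  by case: b; rewrite // schedF_cell => /andP [].
by rewrite schedF_cell /f128 ffunE => /and3P [-> /seen_le -> /seen_le ->].
Qed.
End Schedule.

Definition same_dynamics (n : nat) (D D' : seq {set 'I_n}) : Prop :=
  [/\ is_schedule D, is_schedule D' & forall x : config n, schedF D x = schedF D' x].

Lemma same_dynamics_sym (n : nat) (D D' : seq {set 'I_n}) :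
  same_dynamics D D' -> same_dynamics D' D.
Proof. by case=> HD HD' same; split=> // x; rewrite same. Qed.

Definition ones_but (n : nat) (c : 'I_n) : config n := [ffun i => i != c].

Lemma flowL_flowRF (n : nat) (D : seq {set 'I_n}) i : flowL D i -> flowR D i = false.
Proof. rewrite /flowL /flowR; lia. Qed.

Lemma flowR_flowLF (n : nat) (D : seq {set 'I_n}) i : flowR D i -> flowL D i = false.
Proof. rewrite /flowL /flowR; lia. Qed.

Lemma arc_labE (n : nat) (D : seq {set 'I_n}) (a : bool * 'I_n) :
  arc_lab D a = ~~ (if a.1 then flowL D a.2 else flowR D a.2).
Proof. by case: a => [[] i]; rewrite /arc_lab /lab /flowL /flowR /= -leqNgt. Qed.

Section Positions.
Variable n : nat.
Hypothesis n_gt0 : 0 < n.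

Definition pos (t : nat) : 'I_n := Ordinal (ltn_pmod t n_gt0).

Lemma pos_ord (i : 'I_n) : pos i = i.
Proof. by apply: val_inj; rewrite /= modn_small. Qed.

Lemma posD t : pos (t + n) = pos t.
Proof. by apply: val_inj; rewrite /= modnDr. Qed.

Lemma pos_addl a b : pos (pos a + b) = pos (a + b).
Proof. by apply: val_inj; rewrite /= modnDml. Qed.

Lemma ordS_pos t : ordS (pos t) = pos t.+1.
Proof. by apply: val_inj; rewrite /= -addn1 modnDml addn1. Qed.

Lemma ord_pred_pos t : ord_pred (pos t.+1) = pos t.
Proof. by rewrite -ordS_pos ordSK. Qed.

Lemma pos_offset (i c : 'I_n) : exists2 d, d < n & c = pos (i + d).
Proof.
exists ((c + n - i) %% n); first exact: ltn_pmod.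
have i_lt := ltn_ord i.
by apply: val_inj; rewrite /= modnDmr (_ : i + (c + n - i) = c + n) ?modnDr ?modn_small //; lia.
Qed.

Lemma pos_neq u c : u < c < u + n -> pos u != pos c.
Proof.
move=> u_c; apply/eqP => /(congr1 val) /= /eqP.
rewrite -{1}[u]addn0 (_ : c = u + (c - u)); last lia.
by rewrite eqn_modDl mod0n modn_small; lia.
Qed.

Lemma not_all_flowL (D : seq {set 'I_n}) : ~ (forall i, flowL D i).
Proof.
move=> allL.
have desc t : blk D (pos t) + t <= blk D (pos 0).
  elim: t => [|t IH]; first by rewrite addn0.
  by move: (allL (pos t)); rewrite /flowL ordS_pos; lia.
have := desc n; rewrite (_ : pos n = pos 0); first lia.
by apply: val_inj; rewrite /= modnn mod0n.
Qed.

Section Dynamics.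
Variables (D : seq {set 'I_n}) (x : config n).
Hypothesis HD : is_schedule D.

Lemma schedF_pos t : schedF D x (pos t.+1) =
  [&& x (pos t.+1), (if flowR D (pos t) then schedF D x (pos t) else x (pos t))
                  & (if flowL D (pos t.+1) then schedF D x (pos t.+2) else x (pos t.+2))].
Proof. by rewrite schedF_cell // ord_pred_pos !ordS_pos. Qed.

Lemma schedF_window s e t : ~~ flowR D (pos s) -> ~~ flowL D (pos e) -> s < t <= e ->
  (forall u, s <= u <= e.+1 -> x (pos u)) -> schedF D x (pos t).
Proof.
move=> HRs HLe t_win x_win.
suff win k : forall t, blk D (pos t) < k -> s < t <= e -> schedF D x (pos t).
  exact: win _ _ (ltnSn _) t_win.
elim: k => // k IH [//|{}t] lt_k {}t_win; rewrite schedF_pos.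
apply/and3P; split; first by apply: x_win; lia.
- case: ifP => HR; last by apply: x_win; lia.
  have s_t : s != t by apply: contraNneq HRs => ->.
  by apply: IH; [move: HR; rewrite /flowR ordS_pos | ]; lia.
- case: ifP => HL; last by apply: x_win; lia.
  have t_e : t.+1 != e by apply: contraNneq HLe => <-.
  by apply: IH; [move: HL; rewrite /flowL ordS_pos | ]; lia.
Qed.
End Dynamics.

Lemma flowR_flowL_ahead (D D' : seq {set 'I_n}) k m :
    same_dynamics D D' -> 0 < m <= n - 3 ->
  flowR D (pos k) -> ~~ flowR D' (pos k) -> flowL D' (pos (k + m)).
Proof.
case=> HD HD' same m_bd HR HR'; apply: contraT => HL'.
pose x := ones_but (pos (k + n - 1)).
have out' : schedF D' x (pos k.+1).
  apply: (schedF_window HD' HR' HL') => [|u u_win]; first lia.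
  by rewrite ffunE pos_neq //; lia.
have pos_k : pos k = pos (k + n - 1).+1 by rewrite (_ : (k + n - 1).+1 = k + n) ?posD //; lia.
move: out'; rewrite -same (schedF_pos x HD) HR => /and3P [_ /(schedF_le_f128 HD)].
by rewrite /f128 ffunE {1}pos_k ord_pred_pos ffunE eqxx.
Qed.

Lemma flowL_flowR_behind (D D' : seq {set 'I_n}) k m :
    same_dynamics D D' -> 0 < m <= n - 3 ->
  flowL D (pos (k + m)) -> ~~ flowL D' (pos (k + m)) -> flowR D' (pos k).
Proof.
case=> HD HD' same m_bd HL HL'; apply: contraT => HR'.
pose x := ones_but (pos (k + m).+2).
have out' : schedF D' x (pos (k + m)).
  apply: (schedF_window HD' HR' HL') => [|u u_win]; first lia.
  by rewrite ffunE pos_neq //; lia.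
move: out'; rewrite -same (schedF_cell HD) HL => /and3P [_ _ /(schedF_le_f128 HD)].
by rewrite /f128 /x !ffunE !ordS_pos eqxx !andbF.
Qed.

Lemma no_flowR_flowL (D D' : seq {set 'I_n}) i : 5 < n -> same_dynamics D D' ->
  flowR D i -> flowL D' i -> False.
Proof.
move=> n_gt5 H; rewrite -[i]pos_ord => HR HL'.
have L'_ahead k : flowR D (pos k) -> flowL D' (pos k) ->
    forall m, 0 < m <= n - 3 -> flowL D' (pos (k + m)).
  by move=> HRk HLk m m_bd; apply: flowR_flowL_ahead H m_bd HRk _; rewrite flowL_flowRF.
have HR3 : flowR D (pos (i + 3)).
  have Ei : pos (i + 3 + (n - 3)) = pos i by rewrite -[RHS]posD; congr pos; lia.
  apply: (flowL_flowR_behind (same_dynamics_sym H) (m := n - 3)); first lia.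
    by rewrite Ei.
  by rewrite Ei flowR_flowLF.
have HL3 : flowL D' (pos (i + 3)) by apply: L'_ahead => //; lia.
apply: (not_all_flowL (D := D')) => c; have [d d_lt ->] := pos_offset i c.
have [-> | d_gt0] := posnP d; first by rewrite addn0.
have [d_le | d_gt] := leqP d (n - 3); first by apply: L'_ahead => //; lia.
by rewrite (_ : i + d = i + 3 + (d - 3)); [apply: L'_ahead => //; lia | lia].
Qed.

Lemma flowR_diff_ahead (D D' : seq {set 'I_n}) k m : 5 < n -> same_dynamics D D' ->
    0 < m <= n - 3 -> flowR D (pos k) != flowR D' (pos k) ->
  [&& ~~ flowR D (pos (k + m)), ~~ flowR D' (pos (k + m))
    & flowL D (pos (k + m)) || flowL D' (pos (k + m))].
Proof.
move=> n_gt5; wlog HR : D D' / flowR D (pos k) => [sym H m_bd dR | H m_bd].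
  have [HR | HR'] : flowR D (pos k) \/ flowR D' (pos k)
    by case: (flowR D (pos k)) (flowR D' (pos k)) dR => [] []; auto.
    exact: sym.
  move: (sym D' D HR' (same_dynamics_sym H) m_bd); rewrite eq_sym => /(_ dR).
  by case/and3P=> -> -> /=; rewrite orbC.
move=> dR; have HR' : ~~ flowR D' (pos k) by apply: contraTN dR => ->; rewrite HR.
have HL' := flowR_flowL_ahead H m_bd HR HR'.
rewrite HL' orbT (flowL_flowRF HL') /= !andbT.
by apply/negP => HRm; apply: no_flowR_flowL n_gt5 H HRm HL'.
Qed.

Lemma flowL_diff_behind (D D' : seq {set 'I_n}) k m : 5 < n -> same_dynamics D D' ->
    0 < m <= n - 3 -> flowL D (pos (k + m)) != flowL D' (pos (k + m)) ->
  ~~ flowL D (pos k) && ~~ flowL D' (pos k).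
Proof.
move=> n_gt5; wlog HL : D D' / flowL D (pos (k + m)) => [sym H m_bd dL | H m_bd].
  have [HL | HL'] : flowL D (pos (k + m)) \/ flowL D' (pos (k + m))
    by case: (flowL D (pos (k + m))) (flowL D' (pos (k + m))) dL => [] []; auto.
    exact: sym.
  move: (sym D' D HL' (same_dynamics_sym H) m_bd); rewrite eq_sym => /(_ dL).
  by rewrite andbC.
move=> dL; have HL' : ~~ flowL D' (pos (k + m)) by apply: contraTN dL => ->; rewrite HL.
have HR' := flowL_flowR_behind H m_bd HL HL'.
rewrite (flowR_flowLF HR') andbT.
by apply/negP => HLk; apply: no_flowR_flowL n_gt5 (same_dynamics_sym H) HR' HLk.
Qed.

Lemma silenced_unique (P : pred 'I_n) : 4 < n ->
    (forall k m, 0 < m <= n - 3 -> P (pos k) -> ~~ P (pos (k + m))) ->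
  forall i j, P i -> P j -> i = j.
Proof.
move=> n_gt4 silenced i j Pi Pj; have [d d_lt Ej] := pos_offset i j.
have [d0 | d_gt0] := posnP d; first by rewrite Ej d0 addn0 pos_ord.
have [d_le | d_gt] := leqP d (n - 3).
  have d_bd : 0 < d <= n - 3 by lia.
  by move: (silenced i d d_bd); rewrite pos_ord -Ej Pi Pj => /(_ isT).
have Ei : pos (j + (n - d)) = i.
  by rewrite Ej pos_addl (_ : i + d + (n - d) = i + n) ?posD ?pos_ord //; lia.
have nd_bd : 0 < n - d <= n - 3 by lia.
by move: (silenced j (n - d) nd_bd); rewrite pos_ord Ei Pi Pj => /(_ isT).
Qed.

Lemma no_flowR_flowL_diffs (D D' : seq {set 'I_n}) i j : 6 < n -> same_dynamics D D' ->
  flowR D i != flowR D' i -> flowL D j != flowL D' j -> False.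
Proof.
move=> n_gt6 H dR dL; have [d d_lt Ej] := pos_offset i j.
have [m [p [m_bd p_bd Eimp]]] : exists m p,
    [/\ 0 < m <= n - 3, 0 < p <= n - 3 & pos (i + m + p) = j].
  rewrite Ej; have [d_gt1 | d_le1] := ltnP 1 d.
    exists (minn d.-1 (n - 3)), (d - minn d.-1 (n - 3)); split; [lia | lia | congr pos; lia].
  exists (n - 3), (d + 3); split; [lia | lia | rewrite -(posD (i + d)); congr pos; lia].
have n_gt5 : 5 < n by lia.
have := flowR_diff_ahead (k := i) n_gt5 H m_bd.
rewrite pos_ord => /(_ dR) /and3P [_ _].
have := flowL_diff_behind (k := i + m) n_gt5 H p_bd.
by rewrite Eimp => /(_ dL) /andP [/negPf -> /negPf ->].
Qed.

Lemma arc_diff_unique (D D' : seq {set 'I_n}) a b : 6 < n -> same_dynamics D D' ->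
  arc_lab D a != arc_lab D' a -> arc_lab D b != arc_lab D' b -> a = b.
Proof.
move=> n_gt6 H; have n_gt5 : 5 < n by lia.
rewrite !arc_labE !(inj_eq negb_inj); case: a b => [[] i] [[] j] /= da db.
- congr pair; apply: (silenced_unique (P := fun i => flowL D i != flowL D' i)) da db; first lia.
  move=> k m m_bd; apply: contraL => /(flowL_diff_behind n_gt5 H m_bd).
  by case/andP=> /negPf -> /negPf ->.
- by case: (no_flowR_flowL_diffs n_gt6 H db da).
- by case: (no_flowR_flowL_diffs n_gt6 H da db).
- congr pair; apply: (silenced_unique (P := fun i => flowR D i != flowR D' i)) da db; first lia.
  move=> k m m_bd /(flowR_diff_ahead n_gt5 H m_bd).
  by case/and3P=> /negPf -> /negPf ->.
Qed.
End Positions.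

Theorem mainTheorem18 (n : nat) (D D' : seq {set 'I_n}) :
  6 < n -> is_schedule D -> is_schedule D' -> special128 D D' ->
  #|[set a : bool * 'I_n | arc_lab D a != arc_lab D' a]| = 1.
Proof.
move=> n_gt6 HD HD' [not_equiv same].
have n_gt0 : 0 < n by lia.
have H : same_dynamics D D' by [].
have [a da] : exists a, arc_lab D a != arc_lab D' a.
  case: (pickP (fun a => arc_lab D a != arc_lab D' a)) => [a da | none]; first by exists a.
  by case: not_equiv => a; apply/eqP/negbFE/none.
apply/eqP/cards1P; exists a; apply/setP => b; rewrite !inE.
apply/idP/eqP => [db | ->] //.
exact: (arc_diff_unique n_gt0 n_gt6 H db da).
Qed.
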